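(* Let $C\in\mathbb{R}^{n\times n}$ be symmetric, let $\alpha>0,\beta>0$ satisfy $\kappa:=\frac{(\alpha^2-4\alpha-2)\beta}{2\alpha^2}-\frac1\beta>0$, and let $\rho>0$ with $\rho\ge\max\{\alpha\|C\|_\infty,\beta\|C\|\}$. Let $(\tilde\sigma^k,\sigma^k,y^k)$ be generated by the ADMM-BM algorithm described in the context, with Assumption A holding. Then for all $k\ge2$ the sequence $L_\rho(\tilde\sigma^k,\sigma^k,y^k)$ is monotonically non-increasing and $$L_\rho(\tilde\sigma^k,\sigma^k,y^k)-L_\rho(\tilde\sigma^{k+1},\sigma^{k+1},y^{k+1})\ge\kappa\|C\|\,\|\tilde\sigma^{k+1}-\tilde\sigma^k\|_F^2+\frac\rho2\|\sigma^{k+1}-\sigma^k\|_F^2.$$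
   Context: $\langle A,B\rangle=\mathrm{Tr}(A^\top B)$, $\|\cdot\|_F$ Frobenius norm, $\|C\|$ spectral norm, $\|C\|_\infty=\max_i\sum_j|C_{ij}|$. For $\sigma\in\mathbb{R}^{n\times r}$, $\sigma_i$ is its $i$-th row; $\mathcal{M}=\{\sigma\in\mathbb{R}^{n\times r}:\|\sigma_i\|=1\ \forall i\}$. ADMM-BM with parameter $\rho$: choose $\tilde\sigma^0\in\mathcal{M}$, $\sigma^0=\tilde\sigma^0$, $y^0=C\tilde\sigma^0$. For $k=0,1,\dots$: $\gamma^k=\sigma^k-\frac1\rho(y^k+C\sigma^k)$ with rows $\gamma_i^k$; $\tilde\sigma^{k+1}_i=\gamma_i^k/\|\gamma_i^k\|$; $\sigma^{k+1}=\tilde\sigma^{k+1}+\frac1\rho(y^k-C\tilde\sigma^{k+1})$; $y^{k+1}=y^k+\rho(\tilde\sigma^{k+1}-\sigma^{k+1})$. Assumption A: $\gamma_i^k\neq0$ for all $i,k$. $L_\rho(\tilde\sigma,\sigma,y)=\langle C,\tilde\sigma\sigma^\top\rangle+\langle y,\tilde\sigma-\sigma\rangle+\frac\rho2\|\tilde\sigma-\sigma\|_F^2+\sum_i\mathcal{I}_{\{\|u\|=1\}}(\tilde\sigma_i)$, $\mathcal{I}_S$ the indicator function of $S$. *)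

From HB Require Import structures.
From mathcomp Require Import all_boot all_order all_algebra.
From mathcomp Require Import boolp classical_sets reals constructive_ereal.
Set Implicit Arguments. Unset Strict Implicit. Unset Printing Implicit Defensive.
Import Order.TTheory GRing.Theory Num.Theory.
Local Open Scope ring_scope.
Local Open Scope classical_set_scope.

Section Defs.
Variable R : realType.

Definition frob_inner (m n : nat) (A B : 'M[R]_(m, n)) : R := \tr (A^T *m B).

Definition frob_norm (m n : nat) (A : 'M[R]_(m, n)) : R :=
  Num.sqrt (\sum_i \sum_j (A i j) ^+ 2).

Definition row_norm (m n : nat) (A : 'M[R]_(m, n)) (i : 'I_m) : R :=
  Num.sqrt (\sum_j (A i j) ^+ 2).

Definition vnorm (n : nat) (x : 'cV[R]_n) : R := Num.sqrt (\sum_i (x i 0) ^+ 2).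

Definition spec_norm (n : nat) (C : 'M[R]_n) : R :=
  sup [set t | exists x : 'cV[R]_n, vnorm x = 1 /\ t = vnorm (C *m x)].

Definition inf_norm (n : nat) (C : 'M[R]_n) : R :=
  \big[Num.max/0]_i \sum_j `|C i j|.

Definition onM (n r : nat) (s : 'M[R]_(n, r)) : Prop := forall i, row_norm s i = 1.

Definition row_normalize (n r : nat) (g : 'M[R]_(n, r)) : 'M[R]_(n, r) :=
  \matrix_(i, j) (g i j / row_norm g i).

Definition admm_gamma (n r : nat) (C : 'M[R]_n) (rho : R)
  (s y : 'M[R]_(n, r)) : 'M[R]_(n, r) :=
  s - rho^-1 *: (y + C *m s).

Definition admm_step (n r : nat) (C : 'M[R]_n) (rho : R)
  (st : 'M[R]_(n, r) * 'M[R]_(n, r) * 'M[R]_(n, r)) :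
  'M[R]_(n, r) * 'M[R]_(n, r) * 'M[R]_(n, r) :=
  let: (_, s, y) := st in
  let t' := row_normalize (admm_gamma C rho s y) in
  let s' := t' + rho^-1 *: (y - C *m t') in
  let y' := y + rho *: (t' - s') in
  (t', s', y').

Definition admm_iter (n r : nat) (C : 'M[R]_n) (rho : R) (t0 : 'M[R]_(n, r))
  (k : nat) : 'M[R]_(n, r) * 'M[R]_(n, r) * 'M[R]_(n, r) :=
  iter k (admm_step C rho) (t0, t0, C *m t0).

Definition tsig n r C rho t0 k : 'M[R]_(n, r) := (@admm_iter n r C rho t0 k).1.1.
Definition sig n r C rho t0 k : 'M[R]_(n, r) := (@admm_iter n r C rho t0 k).1.2.
Definition ymul n r C rho t0 k : 'M[R]_(n, r) := (@admm_iter n r C rho t0 k).2.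

Definition assumptionA n r C rho (t0 : 'M[R]_(n, r)) : Prop :=
  forall k i, row (i : 'I_n) (admm_gamma C rho (sig C rho t0 k) (ymul C rho t0 k)) != 0.

(* augmented Lagrangian, extended-real valued because of the indicator terms *)
Definition L_rho (n r : nat) (C : 'M[R]_n) (rho : R) (t s y : 'M[R]_(n, r)) : \bar R :=
  ((frob_inner C (t *m s^T) + frob_inner y (t - s)
    + rho / 2 * (frob_norm (t - s)) ^+ 2)%:E
   + \sum_(i < n) (if row_norm t i == 1%R then 0 else +oo))%E.

End Defs.

From HB Require Import structures.
From mathcomp Require Import all_boot all_order all_algebra.
From mathcomp Require Import boolp classical_sets reals constructive_ereal.
From mathcomp Require Import ring lra.
Set Implicit Arguments. Unset Strict Implicit. Unset Printing Implicit Defensive.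
Import Order.TTheory GRing.Theory Num.Theory.
Local Open Scope ring_scope.

(* For k >= 1 the iterates satisfy y^k = C t^k and s^k = t^k + (C t^(k-1) - C t^k) / rho,
   where t = tilde-sigma and s = sigma.  With d = t^(k+1) - t^k, a direct expansion gives
     L(k) - L(k+1) - rho/2 ||s^(k+1) - s^k||^2
       = rho <d, gamma^k> - ||C d||^2 / rho - rho (<d, t^k> + ||d||^2 / 2),
   and the last term vanishes because the rows of t^k and t^(k+1) are unit vectors.
   Since t^(k+1) is the row normalization of gamma^k, <d, gamma^k> is the sum of
   ||gamma_i|| ||d_i||^2 / 2, and rho >= alpha ||C||_inf gives
   ||gamma_i|| >= <gamma_i, t_i> >= 1 - 4/alpha - 2/alpha^2; finally ||C d|| <= ||C|| ||d||,
   and rho >= beta ||C|| makes the resulting coefficient dominate kappa ||C||. *)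

Section FrobeniusInner.
Variable R : realType.
Implicit Types (m p : nat).

Lemma frob_inner_sum m p (A B : 'M[R]_(m, p)) :
  frob_inner A B = \sum_i \sum_j A i j * B i j.
Proof.
rewrite /frob_inner /mxtrace exchange_big; apply: eq_bigr => j _.
by rewrite mxE; apply: eq_bigr => i _; rewrite mxE.
Qed.

Lemma frob_innerC m p (A B : 'M[R]_(m, p)) : frob_inner A B = frob_inner B A.
Proof. by rewrite /frob_inner -mxtrace_tr trmx_mul trmxK. Qed.

Lemma frob_innerDr m p (A B D : 'M[R]_(m, p)) :
  frob_inner D (A + B) = frob_inner D A + frob_inner D B.
Proof. by rewrite /frob_inner mulmxDr mxtraceD. Qed.

Lemma frob_innerZr m p a (A D : 'M[R]_(m, p)) :
  frob_inner D (a *: A) = a * frob_inner D A.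
Proof. by rewrite /frob_inner -scalemxAr mxtraceZ. Qed.

Lemma frob_innerNr m p (A D : 'M[R]_(m, p)) : frob_inner D (- A) = - frob_inner D A.
Proof. by rewrite -scaleN1r frob_innerZr mulN1r. Qed.

Lemma frob_innerDl m p (A B D : 'M[R]_(m, p)) :
  frob_inner (A + B) D = frob_inner A D + frob_inner B D.
Proof. by rewrite !(frob_innerC _ D) frob_innerDr. Qed.

Lemma frob_innerZl m p a (A D : 'M[R]_(m, p)) :
  frob_inner (a *: A) D = a * frob_inner A D.
Proof. by rewrite !(frob_innerC _ D) frob_innerZr. Qed.

Lemma frob_innerNl m p (A D : 'M[R]_(m, p)) : frob_inner (- A) D = - frob_inner A D.
Proof. by rewrite !(frob_innerC _ D) frob_innerNr. Qed.

Definition frob_innerE :=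
  (frob_innerDl, frob_innerDr, frob_innerNl, frob_innerNr, frob_innerZl, frob_innerZr).

Lemma frob_inner_trmx m p (A B : 'M[R]_(m, p)) : frob_inner A^T B^T = frob_inner A B.
Proof. by rewrite /frob_inner trmxK mxtrace_mulC -/(frob_inner B A) frob_innerC. Qed.

Lemma frob_inner_mulmx_sym m p (C : 'M[R]_m) (A B : 'M[R]_(m, p)) :
  C^T = C -> frob_inner (C *m A) B = frob_inner A (C *m B).
Proof. by move=> sC; rewrite /frob_inner trmx_mul sC mulmxA. Qed.

Lemma frob_inner_mul_trmx m p (C : 'M[R]_m) (t s : 'M[R]_(m, p)) :
  C^T = C -> frob_inner C (t *m s^T) = frob_inner s (C *m t).
Proof. by move=> sC; rewrite /frob_inner sC mulmxA mxtrace_mulC. Qed.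

Lemma frob_inner_row m k p (A : 'M[R]_(m, p)) (B : 'M[R]_(k, p)) i l :
  frob_inner (row i A) (row l B) = (A *m B^T) i l.
Proof.
rewrite frob_inner_sum big_ord1 !mxE; apply: eq_bigr => j _.
by rewrite !mxE.
Qed.

Lemma frob_inner_rows m p (A B : 'M[R]_(m, p)) :
  frob_inner A B = \sum_i frob_inner (row i A) (row i B).
Proof.
transitivity (\tr (A *m B^T)); first by rewrite -frob_inner_trmx /frob_inner trmxK.
by apply: eq_bigr => i _; rewrite frob_inner_row.
Qed.

Lemma frob_inner_cols m p (A B : 'M[R]_(m, p)) :
  frob_inner A B = \sum_j frob_inner (col j A) (col j B).
Proof.
rewrite -frob_inner_trmx frob_inner_rows.
by apply: eq_bigr => j _; rewrite -frob_inner_trmx !tr_row !trmxK.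
Qed.

Lemma frob_normE m p (A : 'M[R]_(m, p)) : frob_norm A = Num.sqrt (frob_inner A A).
Proof. by rewrite frob_inner_sum. Qed.

Lemma frob_inner_self_ge0 m p (A : 'M[R]_(m, p)) : 0 <= frob_inner A A.
Proof.
by rewrite frob_inner_sum; do 2 (apply: sumr_ge0 => ? _); rewrite -expr2 sqr_ge0.
Qed.

Lemma frob_norm_sqr m p (A : 'M[R]_(m, p)) : frob_norm A ^+ 2 = frob_inner A A.
Proof. by rewrite frob_normE sqr_sqrtr // frob_inner_self_ge0. Qed.

Lemma frob_norm_ge0 m p (A : 'M[R]_(m, p)) : 0 <= frob_norm A.
Proof. exact: sqrtr_ge0. Qed.

Lemma frob_inner_self_eq0 m p (A : 'M[R]_(m, p)) : (frob_inner A A == 0) = (A == 0).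
Proof.
apply/eqP/eqP => [A0|->]; last by rewrite /frob_inner mulmx0 mxtrace0.
have sq_ge0 i j : 0 <= A i j * A i j by rewrite -expr2 sqr_ge0.
have row_ge0 i : 0 <= \sum_j A i j * A i j by apply: sumr_ge0 => j _.
apply/matrixP => i j; rewrite mxE; apply/eqP; rewrite -sqrf_eq0 expr2; apply/eqP.
move: A0; rewrite frob_inner_sum => /(psumr_eq0P (fun i _ => row_ge0 i))/(_ i isT).
by move/(psumr_eq0P (fun j _ => sq_ge0 i j))/(_ j isT).
Qed.

Lemma frob_norm0 m p : frob_norm (0 : 'M[R]_(m, p)) = 0.
Proof. by rewrite frob_normE /frob_inner mulmx0 mxtrace0 sqrtr0. Qed.

Lemma frob_norm_gt0 m p (A : 'M[R]_(m, p)) : (0 < frob_norm A) = (A != 0).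
Proof.
by rewrite frob_normE sqrtr_gt0 lt_def frob_inner_self_eq0 frob_inner_self_ge0 andbT.
Qed.

Lemma frob_normZ m p a (A : 'M[R]_(m, p)) : frob_norm (a *: A) = `|a| * frob_norm A.
Proof.
by rewrite !frob_normE frob_innerZl frob_innerZr mulrA -expr2 sqrtrM ?sqr_ge0 // sqrtr_sqr.
Qed.

Lemma frob_inner_sqr_le m p (A B : 'M[R]_(m, p)) :
  frob_inner A B ^+ 2 <= frob_inner A A * frob_inner B B.
Proof.
have [->|nzB] := eqVneq B 0.
  by rewrite /frob_inner !mulmx0 !mxtrace0 mulr0 expr0n.
have Bpos : 0 < frob_inner B B by rewrite lt_def frob_inner_self_eq0 nzB frob_inner_self_ge0.
(* Cauchy-Schwarz from 0 <= || <B,B> A - <A,B> B ||^2. *)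
have := frob_inner_self_ge0 (frob_inner B B *: A - frob_inner A B *: B).
rewrite !frob_innerE (frob_innerC B A); nra.
Qed.

Lemma frob_inner_CauchySchwarz m p (A B : 'M[R]_(m, p)) :
  `|frob_inner A B| <= frob_norm A * frob_norm B.
Proof.
rewrite !frob_normE -sqrtrM ?frob_inner_self_ge0 // -sqrtr_sqr ler_sqrt.
  exact: frob_inner_sqr_le.
by rewrite mulr_ge0 ?frob_inner_self_ge0.
Qed.

Lemma row_normE m p (A : 'M[R]_(m, p)) i : row_norm A i = frob_norm (row i A).
Proof.
rewrite /row_norm /frob_norm big_ord1; congr Num.sqrt.
by apply: eq_bigr => j _; rewrite mxE.
Qed.

Lemma vnormE m (x : 'cV[R]_m) : vnorm x = frob_norm x.
Proof.
rewrite /vnorm /frob_norm; congr Num.sqrt.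
by apply: eq_bigr => i _; rewrite big_ord1.
Qed.

End FrobeniusInner.

Section OperatorNorms.
Variable R : realType.

Lemma frob_norm_mulmx_le m p q (A : 'M[R]_(m, p)) (B : 'M[R]_(p, q)) :
  frob_norm (A *m B) <= frob_norm A * frob_norm B.
Proof.
rewrite -(ler_pXn2r (_ : 0 < 2)%N) ?nnegrE ?mulr_ge0 ?frob_norm_ge0 //.
rewrite exprMn !frob_norm_sqr -(frob_inner_trmx B) (frob_inner_rows A) (frob_inner_rows B^T).
rewrite frob_inner_sum mulr_suml; apply: ler_sum => i _; rewrite mulr_sumr.
apply: ler_sum => j _; rewrite -expr2.
have -> : (A *m B) i j = frob_inner (row i A) (row j B^T) by rewrite frob_inner_row trmxK.
exact: frob_inner_sqr_le.
Qed.

Lemma inf_norm_ge0 n (C : 'M[R]_n) : 0 <= inf_norm C.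
Proof. exact: bigmax_ge_id. Qed.

Lemma inf_norm_mulmx_row_le n p (C : 'M[R]_n) (X T : 'M[R]_(n, p)) i b :
  (forall m, `|frob_inner (row m X) (row i T)| <= b) ->
  forall l, `|frob_inner (row l (C *m X)) (row i T)| <= inf_norm C * b.
Proof.
move=> Xb l; have b0 : 0 <= b := le_trans (normr_ge0 _) (Xb l).
rewrite frob_inner_row -mulmxA mxE; apply: le_trans (ler_norm_sum _ _ _) _.
apply: le_trans (_ : \sum_m `|C l m| * b <= _).
  by apply: ler_sum => m _; rewrite normrM ler_wpM2l // -frob_inner_row.
by rewrite -mulr_suml ler_wpM2r // (le_bigmax 0 (fun i => \sum_j `|C i j|) l).
Qed.

Section Spectral.
Variables (n : nat) (C : 'M[R]_n).
Local Open Scope classical_set_scope.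

Let spec_set := [set t | exists x : 'cV[R]_n, vnorm x = 1 /\ t = vnorm (C *m x)].

Let spec_set_ub : has_ubound spec_set.
Proof.
exists (frob_norm C) => _ [x [x1 ->]].
by rewrite !vnormE in x1 *; rewrite -[frob_norm C]mulr1 -x1 frob_norm_mulmx_le.
Qed.

Lemma spec_norm_ge0 : 0 <= spec_norm C.
Proof.
have [[x x1]|no_unit] := pselect (exists x : 'cV[R]_n, vnorm x = 1).
  apply: le_trans (_ : vnorm (C *m x) <= _); first by rewrite vnormE frob_norm_ge0.
  by apply: (ub_le_sup spec_set_ub); exists x.
rewrite /spec_norm -/spec_set (_ : spec_set = set0) ?sup0 //.
by apply/seteqP; split => // t [x [x1 _]]; apply: no_unit; exists x.
Qed.

Lemma spec_norm_mulmx (x : 'cV[R]_n) : frob_norm (C *m x) <= spec_norm C * frob_norm x.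
Proof.
have [->|nz_x] := eqVneq x 0; first by rewrite mulmx0 frob_norm0 mulr0.
have x_gt0 : 0 < frob_norm x by rewrite frob_norm_gt0.
set u := (frob_norm x)^-1 *: x.
have u1 : vnorm u = 1.
  by rewrite vnormE frob_normZ ger0_norm ?invr_ge0 ?frob_norm_ge0 // mulVf ?gt_eqF.
have := ub_le_sup spec_set_ub (ex_intro _ u (conj u1 erefl)).
rewrite vnormE -scalemxAr frob_normZ ger0_norm ?invr_ge0 ?frob_norm_ge0 //.
by rewrite mulrC ler_pdivrMr.
Qed.

Lemma frob_norm_mulmx_spec p (X : 'M[R]_(n, p)) :
  frob_norm (C *m X) <= spec_norm C * frob_norm X.
Proof.
rewrite -(ler_pXn2r (_ : 0 < 2)%N) ?nnegrE ?mulr_ge0 ?frob_norm_ge0 ?spec_norm_ge0 //.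
rewrite exprMn !frob_norm_sqr (frob_inner_cols (C *m X)) (frob_inner_cols X) mulr_sumr.
apply: ler_sum => j _.
rewrite colE -mulmxA -colE -!frob_norm_sqr -exprMn.
by rewrite ler_pXn2r ?nnegrE ?mulr_ge0 ?frob_norm_ge0 ?spec_norm_ge0 ?spec_norm_mulmx.
Qed.
End Spectral.
End OperatorNorms.

Section UnitRows.
Variable R : realType.

Lemma frob_norm_normalize m p (g : 'M[R]_(m, p)) :
  g != 0 -> frob_norm ((frob_norm g)^-1 *: g) = 1.
Proof.
rewrite -frob_norm_gt0 => g_gt0.
by rewrite frob_normZ ger0_norm ?invr_ge0 ?frob_norm_ge0 // mulVf ?gt_eqF.
Qed.

Lemma frob_inner_sub_unitl m p (u v : 'M[R]_(m, p)) :
  frob_norm u = 1 -> frob_norm v = 1 ->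
  frob_inner (v - u) u = - (frob_norm (v - u) ^+ 2 / 2).
Proof.
move=> hu hv.
have uu : frob_inner u u = 1 by rewrite -frob_norm_sqr hu expr1n.
have vv : frob_inner v v = 1 by rewrite -frob_norm_sqr hv expr1n.
rewrite frob_norm_sqr !frob_innerE uu vv (frob_innerC u v); lra.
Qed.

Lemma frob_inner_sub_unitr m p (u v : 'M[R]_(m, p)) :
  frob_norm u = 1 -> frob_norm v = 1 ->
  frob_inner (v - u) v = frob_norm (v - u) ^+ 2 / 2.
Proof.
move=> hu hv; rewrite -[X in frob_inner _ X](subrK u v) frob_innerDr.
rewrite frob_inner_sub_unitl // -frob_norm_sqr; lra.
Qed.

Lemma frob_inner_normalize_sub m p (u g : 'M[R]_(m, p)) :
  frob_norm u = 1 -> g != 0 ->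
  frob_inner ((frob_norm g)^-1 *: g - u) g
  = frob_norm g * (frob_norm ((frob_norm g)^-1 *: g - u) ^+ 2 / 2).
Proof.
move=> hu nz_g; have hv := frob_norm_normalize nz_g.
set v := _ *: g in hv *.
have gE : g = frob_norm g *: v by rewrite /v scalerA mulfV ?scale1r // gt_eqF ?frob_norm_gt0.
by rewrite {1}gE frob_innerZr frob_inner_sub_unitr.
Qed.

Lemma row_row_normalize m p (g : 'M[R]_(m, p)) i :
  row i (row_normalize g) = (row_norm g i)^-1 *: row i g.
Proof. by apply/rowP => j; rewrite !mxE mulrC. Qed.

Lemma onM_row_normalize m p (g : 'M[R]_(m, p)) :
  (forall i, row i g != 0) -> onM (row_normalize g).
Proof.
by move=> nz_g i; rewrite row_normE row_row_normalize row_normE frob_norm_normalize.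
Qed.

Lemma frob_inner_onM_sub m p (t tn : 'M[R]_(m, p)) :
  onM t -> onM tn -> frob_inner (tn - t) t = - (frob_norm (tn - t) ^+ 2 / 2).
Proof.
move=> ht htn; rewrite frob_norm_sqr !frob_inner_rows mulr_suml -sumrN.
apply: eq_bigr => i _; rewrite raddfB /= -frob_norm_sqr.
by apply: frob_inner_sub_unitl; rewrite -row_normE.
Qed.

Lemma frob_inner_row_normalize_sub_ge m p (t g : 'M[R]_(m, p)) c :
  onM t -> (forall i, row i g != 0) -> (forall i, c <= row_norm g i) ->
  c / 2 * frob_norm (row_normalize g - t) ^+ 2 <= frob_inner (row_normalize g - t) g.
Proof.
move=> ht nz_g c_le; rewrite frob_norm_sqr !frob_inner_rows mulr_sumr.
apply: ler_sum => i _; rewrite raddfB /= row_row_normalize row_normE.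
rewrite frob_inner_normalize_sub -?row_normE // -frob_norm_sqr.
have := sqr_ge0 (frob_norm ((frob_norm (row i g))^-1 *: row i g - row i t)).
by have := c_le i; rewrite row_normE; nra.
Qed.

End UnitRows.

Section Iterates.
Variables (R : realType) (n r : nat) (C : 'M[R]_n) (rho : R) (t0 : 'M[R]_(n, r)).
Hypothesis rho_neq0 : rho != 0.

Lemma ymul_tsig k : ymul C rho t0 k = C *m tsig C rho t0 k.
Proof.
(* rho (t' - s') = C t' - y, so the multiplier update forgets y *)
case: k => [//|k]; rewrite /tsig /ymul /admm_iter iterS.
case: (iter k _ _) => [[? s] y] /=.
by rewrite opprD addrA subrr add0r scalerN scalerA mulfV // scale1r opprB addrC subrK.
Qed.

Lemma tsigS k : tsig C rho t0 k.+1 =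
  row_normalize (admm_gamma C rho (sig C rho t0 k) (C *m tsig C rho t0 k)).
Proof.
rewrite -ymul_tsig /tsig /sig /ymul /admm_iter iterS.
by case: (iter k _ _) => [[? s] y].
Qed.

Lemma sigS k : sig C rho t0 k.+1 =
  tsig C rho t0 k.+1 + rho^-1 *: (C *m tsig C rho t0 k - C *m tsig C rho t0 k.+1).
Proof.
rewrite -ymul_tsig /tsig /sig /ymul /admm_iter iterS.
by case: (iter k _ _) => [[? s] y].
Qed.

Lemma onM_tsig k : onM t0 -> assumptionA C rho t0 -> onM (tsig C rho t0 k).
Proof.
case: k => [//|k] _ hA; rewrite tsigS -ymul_tsig.
exact/onM_row_normalize/hA.
Qed.

End Iterates.

Definition admm_kappa (R : realType) (alpha beta : R) : R :=
  (alpha ^+ 2 - 4 * alpha - 2) * beta / (2 * alpha ^+ 2) - beta^-1.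

Lemma admm_kappa_le (R : realType) (alpha beta rho x S : R) :
  0 < alpha -> 0 < beta -> 0 < rho -> 0 <= x -> alpha * x <= 1 ->
  0 <= S -> beta * S <= rho -> 0 < admm_kappa alpha beta ->
  admm_kappa alpha beta * S <= rho * (1 - 4 * x - 2 * x ^+ 2) / 2 - S ^+ 2 / rho.
Proof.
move=> a_gt0 b_gt0 r_gt0 x_ge0 ax_le1 S_ge0 bS_le k_gt0.
set c := 1 - 4 / alpha - 2 / alpha ^+ 2.
have kE : admm_kappa alpha beta = beta * c / 2 - beta^-1.
  by rewrite /admm_kappa /c; field; rewrite !gt_eqF.
have c_gt0 : 0 < c.
  have : 0 < beta * c by move: k_gt0; rewrite kE; have := invr_gt0 beta; rewrite b_gt0; lra.
  by rewrite pmulr_rgt0.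
have c_le : c <= 1 - 4 * x - 2 * x ^+ 2.
  have xa : x <= alpha^-1 by rewrite -(ler_pM2l a_gt0) mulfV ?gt_eqF.
  have : 0 <= alpha^-1 by rewrite invr_ge0 ltW.
  rewrite /c; nra.
have -> : admm_kappa alpha beta * S
          = rho * c / 2 - S ^+ 2 / rho - (rho - beta * S) * (c / 2 + S / (beta * rho)).
  by rewrite kE; field; rewrite !gt_eqF.
have : 0 <= (rho - beta * S) * (c / 2 + S / (beta * rho)).
  have : 0 <= S / (beta * rho) by rewrite divr_ge0 // ltW // mulr_gt0.
  by move=> ?; apply: mulr_ge0; lra.
have : rho * c <= rho * (1 - 4 * x - 2 * x ^+ 2) by rewrite ler_pM2l.
lra.
Qed.

Section Descent.
Variables (R : realType) (n r : nat) (C : 'M[R]_n) (rho : R).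
Hypotheses (C_sym : C^T = C) (rho_gt0 : 0 < rho).

Definition aug_lagr (t s y : 'M[R]_(n, r)) : R :=
  frob_inner C (t *m s^T) + frob_inner y (t - s) + rho / 2 * frob_norm (t - s) ^+ 2.

Lemma L_rho_onM (t s y : 'M[R]_(n, r)) :
  onM t -> L_rho C rho t s y = (aug_lagr t s y)%:E.
Proof. by move=> ht; rewrite /L_rho big1 ?adde0 // => i _; rewrite ht eqxx. Qed.

Lemma aug_lagr_step_eq (tp t s tn sn : 'M[R]_(n, r)) :
  s = t + rho^-1 *: (C *m tp - C *m t) ->
  sn = tn + rho^-1 *: (C *m t - C *m tn) ->
  aug_lagr t s (C *m t) - aug_lagr tn sn (C *m tn) - rho / 2 * frob_norm (sn - s) ^+ 2
  = rho * frob_inner (tn - t) (admm_gamma C rho s (C *m t))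
    - rho^-1 * frob_norm (C *m (tn - t)) ^+ 2
    - rho * (frob_inner (tn - t) t + frob_norm (tn - t) ^+ 2 / 2).
Proof.
move=> -> ->; have C_adj := frob_inner_mulmx_sym _ _ C_sym.
have C_comm (X Y : 'M[R]_(n, r)) : frob_inner X (C *m Y) = frob_inner Y (C *m X).
  by rewrite -C_adj frob_innerC.
have C2_comm (X Y : 'M[R]_(n, r)) :
    frob_inner X (C *m (C *m Y)) = frob_inner Y (C *m (C *m X)).
  by rewrite -[LHS]C_adj -[RHS]C_adj frob_innerC.
rewrite /aug_lagr /admm_gamma !frob_inner_mul_trmx // !frob_norm_sqr.
rewrite !(mulmxDr, mulmxN, mulmxBr, linearZ) /= !mulmxBr !frob_innerE !C_adj.
(* normal form: C acts on the second argument, distinct iterates ordered tp, t, tn *)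
rewrite ?(frob_innerC t tp) ?(frob_innerC tn tp) ?(frob_innerC tn t).
rewrite ?(C_comm t tp) ?(C_comm tn tp) ?(C_comm tn t).
rewrite ?(C2_comm t tp) ?(C2_comm tn tp) ?(C2_comm tn t).
by field; rewrite gt_eqF.
Qed.

Lemma admm_gamma_row_norm_ge (tp t : 'M[R]_(n, r)) i : onM tp -> onM t ->
  1 - 4 * (inf_norm C / rho) - 2 * (inf_norm C / rho) ^+ 2 <=
  row_norm (admm_gamma C rho (t + rho^-1 *: (C *m tp - C *m t)) (C *m t)) i.
Proof.
move=> htp ht; set e := rho^-1; set N := inf_norm C.
set g := admm_gamma _ _ _ _.
apply: le_trans (_ : _ <= frob_inner (row i g) (row i t)) _; last first.
  apply: le_trans (ler_norm _) _; apply: le_trans (frob_inner_CauchySchwarz _ _) _.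
  by rewrite -!row_normE ht mulr1.
have unit_inner (X : 'M[R]_(n, r)) m : onM X -> `|frob_inner (row m X) (row i t)| <= 1.
  move=> hX; apply: le_trans (frob_inner_CauchySchwarz _ _) _.
  by rewrite -!row_normE hX ht mulr1.
have CX_le X : onM X -> forall l, `|frob_inner (row l (C *m X)) (row i t)| <= N.
  by move=> hX; rewrite -[N]mulr1; apply: inf_norm_mulmx_row_le => m; exact: unit_inner.
have CCX_le X : onM X -> `|frob_inner (row i (C *m (C *m X))) (row i t)| <= N * N.
  by move=> hX; apply: inf_norm_mulmx_row_le; exact: CX_le.
have scale_le (u v w : R) : 0 <= u -> `|v| <= w -> - (u * w) <= u * v <= u * w.
  by move=> u0 /ler_normlP[? ?]; apply/andP; split; nra.
have e0 : 0 <= e by rewrite invr_ge0 ltW.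
have ee0 : 0 <= e * e by rewrite mulr_ge0.
move: (scale_le _ _ _ e0 (CX_le _ htp i)) (scale_le _ _ _ e0 (CX_le _ ht i)).
move: (scale_le _ _ _ ee0 (CCX_le _ htp)) (scale_le _ _ _ ee0 (CCX_le _ ht)).
have rowZ a (X : 'M[R]_(n, r)) : row i (a *: X) = a *: row i X.
  by apply/rowP => j; rewrite !mxE.
(* gamma = t + e (C tp - 3 C t) - e^2 (C^2 tp - C^2 t) *)
rewrite /g /admm_gamma !(mulmxDr, mulmxN, mulmxBr) -!scalemxAr !(scalerDr, scalerN, scalerA).
rewrite !raddfD !raddfN /= !rowZ !frob_innerE -frob_norm_sqr -row_normE ht expr1n -/e.
by move=> /andP[? ?] /andP[? ?] /andP[? ?] /andP[? ?]; lra.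
Qed.

Lemma aug_lagr_descent alpha beta (tp t s tn sn : 'M[R]_(n, r)) :
  0 < alpha -> 0 < beta -> alpha * inf_norm C <= rho -> beta * spec_norm C <= rho ->
  0 < admm_kappa alpha beta -> onM tp -> onM t ->
  s = t + rho^-1 *: (C *m tp - C *m t) ->
  (forall i, row i (admm_gamma C rho s (C *m t)) != 0) ->
  tn = row_normalize (admm_gamma C rho s (C *m t)) ->
  sn = tn + rho^-1 *: (C *m t - C *m tn) ->
  aug_lagr tn sn (C *m tn) + admm_kappa alpha beta * spec_norm C * frob_norm (tn - t) ^+ 2
    + rho / 2 * frob_norm (sn - s) ^+ 2 <= aug_lagr t s (C *m t).
Proof.
move=> a_gt0 b_gt0 aN_le bS_le k_gt0 htp ht hs nz_g htn hsn.
have := aug_lagr_step_eq hs hsn; rewrite frob_inner_onM_sub //; last first.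
  by rewrite htn; exact: onM_row_normalize.
have Cd_le : frob_norm (C *m (tn - t)) ^+ 2 <= spec_norm C ^+ 2 * frob_norm (tn - t) ^+ 2.
  rewrite -exprMn ler_pXn2r ?nnegrE ?mulr_ge0 ?frob_norm_ge0 ?spec_norm_ge0 //.
  exact: frob_norm_mulmx_spec.
set g := admm_gamma C rho s (C *m t) in nz_g htn *.
set c := 1 - 4 * (inf_norm C / rho) - 2 * (inf_norm C / rho) ^+ 2.
set D := frob_norm (tn - t) ^+ 2; set S := spec_norm C.
have D_ge0 : 0 <= D by exact: sqr_ge0.
have g_rows i : c <= row_norm g i by rewrite /g hs; exact: admm_gamma_row_norm_ge.
have inner_ge : c / 2 * D <= frob_inner (tn - t) g.
  by rewrite /D htn; exact: frob_inner_row_normalize_sub_ge.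
have x_ge0 : 0 <= inf_norm C / rho by rewrite divr_ge0 ?inf_norm_ge0 ?ltW.
have ax_le1 : alpha * (inf_norm C / rho) <= 1 by rewrite mulrA ler_pdivrMr // mul1r.
have := admm_kappa_le a_gt0 b_gt0 rho_gt0 x_ge0 ax_le1 (spec_norm_ge0 C) bS_le k_gt0.
rewrite -/c -/S => coef.
have : rho * (c / 2 * D) <= rho * frob_inner (tn - t) g by rewrite ler_pM2l.
have : rho^-1 * frob_norm (C *m (tn - t)) ^+ 2 <= rho^-1 * (S ^+ 2 * D).
  by apply: ler_wpM2l Cd_le; rewrite invr_ge0 ltW.
have := ler_wpM2r D_ge0 coef.
lra.
Qed.

End Descent.

Theorem lemma3 (R : realType) (n r : nat) (C : 'M[R]_n) (alpha beta rho : R)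
  (t0 : 'M[R]_(n, r)) :
  C^T = C ->
  0 < alpha -> 0 < beta ->
  let kappa := (alpha ^+ 2 - 4 * alpha - 2) * beta / (2 * alpha ^+ 2) - beta^-1 in
  0 < kappa ->
  0 < rho -> Num.max (alpha * inf_norm C) (beta * spec_norm C) <= rho ->
  onM t0 ->
  assumptionA C rho t0 ->
  let L k := L_rho C rho (tsig C rho t0 k) (sig C rho t0 k) (ymul C rho t0 k) in
  forall k : nat, (2 <= k)%N ->
    (L k.+1 <= L k)%E /\
    ((kappa * spec_norm C * (frob_norm (tsig C rho t0 k.+1 - tsig C rho t0 k)) ^+ 2
      + rho / 2 * (frob_norm (sig C rho t0 k.+1 - sig C rho t0 k)) ^+ 2)%:E
     <= L k - L k.+1)%E.
Proof.
(* only k >= 1 is needed: the step from k uses the unit rows of t^(k-1) *)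
move=> C_sym a_gt0 b_gt0 kappa k_gt0 rho_gt0 rho_ge ht0 hA L [//|k] _.
move: rho_ge; rewrite ge_max => /andP[aN_le bS_le].
have rho_neq0 : rho != 0 by rewrite gt_eqF.
have yE := ymul_tsig C t0 rho_neq0; have sS := sigS C t0 rho_neq0.
have onM_k j : onM (tsig C rho t0 j) by exact: onM_tsig.
have nz_g i : row i (admm_gamma C rho (sig C rho t0 k.+1) (C *m tsig C rho t0 k.+1)) != 0.
  by rewrite -yE; exact: hA.
have := aug_lagr_descent C_sym rho_gt0 a_gt0 b_gt0 aN_le bS_le k_gt0 (onM_k k) (onM_k k.+1)
  (sS k) nz_g (tsigS C t0 rho_neq0 k.+1) (sS k.+1).
rewrite -[admm_kappa alpha beta]/kappa /L !yE !L_rho_onM // lee_fin -EFinB lee_fin.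
have := mulr_ge0 (mulr_ge0 (ltW k_gt0) (spec_norm_ge0 C))
  (sqr_ge0 (frob_norm (tsig C rho t0 k.+2 - tsig C rho t0 k.+1))).
have := mulr_ge0 (divr_ge0 (ltW rho_gt0) (ler0n R 2))
  (sqr_ge0 (frob_norm (sig C rho t0 k.+2 - sig C rho t0 k.+1))).
by split; lra.
Qed.
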